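(* Let $\ell\ge2$ be an integer and $d=2^\ell-1$. Then the $d$-dimensional hypercube $Q_d$ has a spanning 2-connected subgraph $H$ with $\mathsf{tvc}(H)\le 2\,(2^{d-\ell}+2^{d/2-\ell})$.
   Context: $Q_d$ is the graph on $\{0,1\}^d$ in which two vectors are adjacent iff they differ in exactly one coordinate. A total vertex cover of a graph $H$ is a set $S\subseteq V(H)$ that is a vertex cover (every edge has an endpoint in $S$) and a total dominating set (every vertex of $H$, including those in $S$, has a neighbour in $S$); $\mathsf{tvc}(H)$ is the minimum size of a total vertex cover. *)

From HB Require Import structures.
From mathcomp Require Import all_boot all_order all_algebra.
Set Implicit Arguments. Unset Strict Implicit. Unset Printing Implicit Defensive.

Definition cube (d : nat) := {ffun 'I_d -> bool}.

Definition cube_adj (d : nat) : rel (cube d) :=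
  fun u v => #|[set i : 'I_d | u i != v i]| == 1.

Section Graphs.
Variable T : finType.

Definition spanning_subgraph (G H : rel T) : Prop :=
  symmetric H /\ subrel H G.

Definition connected_on (E : rel T) (S : {set T}) : Prop :=
  forall x y, x \in S -> y \in S ->
    connect [rel a b | [&& E a b, a \in S & b \in S]] x y.

Definition two_connected (E : rel T) : Prop :=
  2 < #|T| /\ connected_on E setT /\
  forall v : T, connected_on E [set~ v].

Definition is_tvc (E : rel T) (S : {set T}) : bool :=
  [forall x, forall y, E x y ==> (x \in S) || (y \in S)] &&
  [forall x, exists y, (y \in S) && E x y].

(* Minimum size of a total vertex cover (#|T|.+1 standing for +infinity
   if none exists). *)
Definition tvc (E : rel T) : nat :=
  \big[minn/#|T|.+1]_(S : {set T} | is_tvc E S) #|S|.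
End Graphs.

(* Index the coordinates of Q_d, d = 2^l - 1, by the nonzero points (a, x)
   of F_2 x F_2^(l-1).  For a vertex v let ypar v be the parity of its
   support among the points with a = 1, and xsum v, ysum v the sums of the
   x over its support among the points with a = 0, resp. a = 1.  The Hamming
   code C = {ypar = 0, xsum = ysum} and, for an injective linear M, the code
   D = {ypar = 1, xsum = M ysum} are disjoint perfect codes of size
   2^(d-l); so every vertex has a neighbour in S = C u D, and S is a total
   vertex cover of the graph H of all cube edges meeting S.  This gives
   tvc(H) <= 2^(d-l+1), slightly better than the stated bound.

   Moving from a word of C to a nearby word of D and back ("hops") realises,
   once M shifts a basis of F_2^(l-1), translations by all weight-three
   codewords; these span C, so H is connected.  After deleting a vertex w,
   the neighbours of w are still joined, around w, by commuting squares of
   hops when x + M x = 0 only for x = 0, or directly when M is the identity.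
   M = multiplication by X modulo X^(l-1) + X + 1 (the identity when l = 2)
   has these properties. *)

From HB Require Import structures.
From mathcomp Require Import all_boot all_order all_algebra.
From mathcomp Require Import zify.
From Stdlib Require Import Btauto.
Import Order.TTheory GRing.Theory Num.Theory.
Set Implicit Arguments. Unset Strict Implicit. Unset Printing Implicit Defensive.
Local Open Scope ring_scope.

Lemma addbE (a b : bool) : a + b = xorb a b. Proof. by case: a; case: b. Qed.
Lemma xorbE (a b : bool) : a (+) b = xorb a b. Proof. by case: a; case: b. Qed.
Lemma zerobE : 0 = false :> bool. Proof. by []. Qed.

(* Boolean identities in [btauto]'s language, after the coordinates [f j]
   of vectors (which may carry different but convertible type annotations)
   have been generalized. *)
Ltac bool_taut :=
  rewrite ?addbE ?xorbE ?zerobE;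
  repeat match goal with |- context [@fun_of_fin ?A ?B ?C ?f ?j] =>
    let t := fresh "t" in set t := @fun_of_fin A B C f j; clearbody t end;
  match goal with |- ?a = ?b => change (a = b :> bool) end; btauto.

Ltac bool_vec :=
  repeat match goal with x := _ |- _ => clearbody x end;
  apply/ffunP => ?; rewrite ?ffunE; bool_taut.

Section BoolVectors.
Variable I : finType.
Implicit Types u v : {ffun I -> bool}.

Lemma addvv u : u + u = 0. Proof. by bool_vec. Qed.

Lemma addvKl u v : u + (u + v) = v. Proof. by bool_vec. Qed.

Lemma addv_eq0 u v : (u + v == 0) = (u == v).
Proof. by apply/eqP/eqP => [h|->]; [rewrite -(addvKl u v) h addr0 | exact: addvv]. Qed.

Lemma addv_neq u v : v != 0 -> u + v != u.
Proof. by apply: contra => /eqP h; rewrite -(addvKl u v) h addvv. Qed.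

End BoolVectors.

Section Cube.
Variable n : nat.
Implicit Types u v : cube n.

Definition unitv (i : 'I_n) : cube n := [ffun j => j == i].

Lemma cube_adjP u v : reflect (exists i, v = u + unitv i) (cube_adj u v).
Proof.
apply: (iffP cards1P) => [[i hi]|[i ->]]; exists i.
  apply/ffunP => j; move/setP: hi => /(_ j); rewrite !inE !ffunE.
  by case: (j == i); case: (u j); case: (v j).
by apply/setP => j; rewrite !inE !ffunE; case: (u j); case: (j == i).
Qed.

Lemma cube_adj_unitv u i : cube_adj u (u + unitv i).
Proof. by apply/cube_adjP; exists i. Qed.

Lemma cube_adj_sym : symmetric (@cube_adj n).
Proof.
move=> u v; rewrite /cube_adj; congr (_ == _); apply: eq_card => j.
by rewrite !inE eq_sym.
Qed.

Lemma sum_unitv u : \sum_(i | u i) unitv i = u.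
Proof.
apply/ffunP => j; rewrite sum_ffunE big_mkcond (bigD1 j) //= big1 => [|i ij].
  by rewrite !ffunE eqxx; case: (u j).
by rewrite !ffunE eq_sym (negbTE ij); case: (u i).
Qed.

Lemma unitv_neq0 i : unitv i != 0.
Proof. by apply/eqP => /ffunP /(_ i); rewrite !ffunE eqxx. Qed.

Lemma cube_adj_irr u : ~~ cube_adj u u.
Proof.
by apply/cube_adjP => -[i /esym/eqP]; rewrite (negbTE (addv_neq u (unitv_neq0 i))).
Qed.

Lemma card_cube : #|cube n| = (2 ^ n)%N.
Proof. by rewrite card_ffun card_bool card_ord. Qed.

Definition weight u := #|[set i | u i]|.

Lemma weight_unitv u i : u i -> weight u = (weight (u + unitv i)).+1.
Proof.
move=> ui; rewrite /weight (cardsD1 i) inE ui add1n; congr _.+1; apply: eq_card => k.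
rewrite !inE !ffunE; case: (k =P i) => [->|/eqP ki]; rewrite ?eqxx ?ui //=.
by rewrite addr0.
Qed.

Lemma weight_addS u i : (weight (u + unitv i)%R <= (weight u).+1)%N.
Proof.
apply: (@leq_trans #|i |: [set k | u k]|); last by rewrite cardsU1; case: (_ \notin _).
apply/subset_leq_card/subsetP => k; rewrite !inE !ffunE.
by case: (k =P i) => //= _; rewrite addr0.
Qed.

Lemma card_packing (L : {set cube n}) (P : finType) (e : P -> cube n) :
  (forall c c' p p', c \in L -> c' \in L -> c + e p = c' + e p' -> p = p') ->
  (#|L| * #|P| <= 2 ^ n)%N.
Proof.
move=> he; pose f (x : cube n * P) := x.1 + e x.2.
have inj_f : {in setX L [set: P] &, injective f}.
  move=> [c p] [c' p']; rewrite !inE /= !andbT /f /= => hc hc' h.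
  by have ep := he _ _ _ _ hc hc' h; subst p'; rewrite (addIr _ h).
rewrite -cardsT -cardsX -card_cube -(card_in_imset inj_f); exact: max_card.
Qed.

End Cube.

Lemma tvc_le (T : finType) (E : rel T) (S : {set T}) : is_tvc E S -> (tvc E <= #|S|)%N.
Proof. exact: (@bigmin_le_cond _ nat). Qed.

Section Hamming.
Variable m : nat.
Local Notation V := {ffun 'I_m -> bool}.
Local Notation W := (bool * V)%type.

Definition hdim := (2 ^ m.+1 - 1)%N.
Local Notation vertex := (cube hdim).

Lemma card_nonzero_points : #|{: {p : W | p != 0}}| = hdim.
Proof.
rewrite card_sig cardC1 card_prod card_bool card_ffun card_bool card_ord.
by rewrite -expnS /hdim subn1.
Qed.

Definition point (i : 'I_hdim) : W :=
  val (enum_val (cast_ord (esym card_nonzero_points) i)).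

Lemma point_inj : injective point.
Proof. by move=> i j /val_inj /enum_val_inj /cast_ord_inj. Qed.

Lemma point_neq0 i : point i != 0.
Proof. exact: (valP (enum_val (cast_ord (esym card_nonzero_points) i))). Qed.

Lemma pointP p : p != 0 -> exists i, point i = p.
Proof.
move=> p0; pose q : {p : W | p != 0} := Sub p p0.
exists (cast_ord card_nonzero_points (enum_rank q)).
by rewrite /point cast_ordK enum_rankK.
Qed.

(* The unit vector of the coordinate labelled [p]; the zero vector for
   [p = 0], which makes the moves below uniform.  It is locked so that
   [bool_vec] treats its coordinates as atoms. *)
Fact ptvec_key : unit. Proof. by []. Qed.
Definition ptvec : W -> vertex :=
  locked_with ptvec_key (fun p => [ffun i => point i == p]).
Canonical ptvec_unlockable := [unlockable fun ptvec].

Lemma ptvecE p i : ptvec p i = (point i == p).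
Proof. by rewrite unlock ffunE. Qed.

Lemma ptvec0 : ptvec 0 = 0.
Proof. by apply/ffunP => i; rewrite ptvecE ffunE (negbTE (point_neq0 i)). Qed.

Lemma ptvec_point i : ptvec (point i) = unitv i.
Proof. by apply/ffunP => j; rewrite ptvecE ffunE (inj_eq point_inj). Qed.

Lemma ptvecP p : p != 0 -> exists i, ptvec p = unitv i.
Proof. by case/pointP => i <-; exists i; rewrite ptvec_point. Qed.

Definition wsum (Z : zmodType) (f : W -> Z) (v : vertex) : Z :=
  \sum_(i | v i) f (point i).

Lemma wsumD (Z : zmodType) (f : W -> Z) : (forall z : Z, z + z = 0) ->
  {morph wsum f : u v / u + v}.
Proof.
move=> zz u v; rewrite /wsum [LHS]big_mkcond [X in _ = X + _]big_mkcond.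
rewrite [X in _ = _ + X]big_mkcond -big_split /=; apply: eq_bigr => i _.
by rewrite ffunE; case: (u i); case: (v i); rewrite /= ?add0r ?addr0 ?zz.
Qed.

Lemma wsum0 (Z : zmodType) (f : W -> Z) : wsum f 0 = 0.
Proof. by rewrite /wsum big_pred0 // => i; rewrite ffunE. Qed.

Lemma wsum_ptvec (Z : zmodType) (f : W -> Z) p : f 0 = 0 -> wsum f (ptvec p) = f p.
Proof.
move=> f0; have [-> | /pointP[i <-]] := eqVneq p 0.
  by rewrite /wsum big_pred0 // => i; rewrite ptvecE (negbTE (point_neq0 i)).
by rewrite /wsum (big_pred1 i) // => j; rewrite ptvecE (inj_eq point_inj).
Qed.

Lemma wsum_supp1 (Z : zmodType) (f : W -> Z) (v : vertex) i : v i ->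
  (forall j, v j -> j != i -> f (point j) = 0) -> wsum f v = f (point i).
Proof.
move=> vi h; rewrite /wsum (bigD1 i) //= big1 ?addr0 // => j /andP[vj ji].
exact: h.
Qed.

(* [(ypar v, xsum v + ysum v)] is the Hamming syndrome of [v]. *)
Definition ypar := wsum (fun p : W => p.1).
Definition xsum := wsum (fun p : W => if p.1 then 0 else p.2).
Definition ysum := wsum (fun p : W => if p.1 then p.2 else 0).

Lemma yparD : {morph ypar : u v / u + v}.
Proof. by apply: wsumD => -[]. Qed.
Lemma xsumD : {morph xsum : u v / u + v}.
Proof. exact/wsumD/addvv. Qed.
Lemma ysumD : {morph ysum : u v / u + v}.
Proof. exact/wsumD/addvv. Qed.

Lemma ypar_ptvec a x : ypar (ptvec (a, x)) = a.
Proof. exact: wsum_ptvec. Qed.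
Lemma xsum_ptvec a x : xsum (ptvec (a, x)) = if a then 0 else x.
Proof. exact: wsum_ptvec. Qed.
Lemma ysum_ptvec a x : ysum (ptvec (a, x)) = if a then x else 0.
Proof. exact: wsum_ptvec. Qed.

Definition statsE :=
  (yparD, xsumD, ysumD, ypar_ptvec, xsum_ptvec, ysum_ptvec).

Lemma card_points : #|{: W}| = (2 ^ m.+1)%N.
Proof. by rewrite card_prod card_bool card_ffun card_bool card_ord -expnS. Qed.

Definition basis_shift (f : V -> V) :=
  forall (i : 'I_m) (h : (i.+1 < m)%N), f (unitv i) = unitv (Ordinal h).

Section Codes.
Variable M : {additive V -> V}.
Hypothesis M_inj : injective M.

(* Two perfect codes, on the two parity classes of [ypar]. *)
Definition codeC : {set vertex} := [set v | ~~ ypar v && (xsum v == ysum v)].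
Definition codeD : {set vertex} := [set v | ypar v && (xsum v == M (ysum v))].
Definition hubs : {set vertex} := codeC :|: codeD.

Definition hgraph : rel vertex :=
  [rel u v | cube_adj u v && ((u \in hubs) || (v \in hubs))].

Lemma inCP v : reflect (ypar v = false /\ xsum v = ysum v) (v \in codeC).
Proof. by rewrite inE; apply: (iffP andP) => [[/negbTE-> /eqP->]|[-> ->]]. Qed.

Lemma inDP v : reflect (ypar v /\ xsum v = M (ysum v)) (v \in codeD).
Proof. by rewrite inE; apply: (iffP andP) => [[-> /eqP->]|[-> ->]]. Qed.

Lemma hubsC v : v \in codeC -> v \in hubs.
Proof. by rewrite in_setU => ->. Qed.

Lemma hubsD v : v \in codeD -> v \in hubs.
Proof. by rewrite in_setU orbC => ->. Qed.

Lemma codeC_notD v : v \in codeC -> v \notin codeD.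
Proof. by case/inCP => hp _; apply/inDP => -[]; rewrite hp. Qed.

Lemma hgraph_sym : symmetric hgraph.
Proof. by move=> u v; rewrite /hgraph /= cube_adj_sym orbC. Qed.

Lemma hgraph_irr v : ~~ hgraph v v.
Proof. by rewrite /hgraph /= (negbTE (cube_adj_irr v)). Qed.

Lemma hgraph_sub : subrel hgraph (@cube_adj hdim).
Proof. by move=> u v /andP[]. Qed.

Lemma card_code_bound (L : {set vertex}) :
  (#|L| * 2 ^ m.+1 <= 2 ^ hdim)%N -> (#|L| <= 2 ^ (hdim - m.+1))%N.
Proof.
have hd : (m.+1 <= hdim)%N by rewrite /hdim; have := ltn_expl m.+1 (isT : (1 < 2)%N); lia.
by move=> h; rewrite -(leq_pmul2r (expn_gt0 2 m.+1)) -expnD subnK.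
Qed.

Lemma card_codeC : (#|codeC| <= 2 ^ (hdim - m.+1))%N.
Proof.
apply: card_code_bound; rewrite -card_points; apply: (@card_packing _ _ _ ptvec).
have decode c p : c \in codeC ->
    (ypar (c + ptvec p), xsum (c + ptvec p) + ysum (c + ptvec p)) = p.
  case/inCP => hp hx; case: p => [[] x]; rewrite !statsE hp hx /=; congr pair; bool_vec.
by move=> c c' p p' hc hc' e; rewrite -(decode c p) // -(decode c' p') // e.
Qed.

Lemma card_codeD : (#|codeD| <= 2 ^ (hdim - m.+1))%N.
Proof.
apply: card_code_bound; rewrite -card_points; apply: (@card_packing _ _ _ ptvec).
have decode c p : c \in codeD ->
    (ypar (c + ptvec p), xsum (c + ptvec p) + M (ysum (c + ptvec p))) =
    (~~ p.1, if p.1 then M p.2 else p.2).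
  case/inDP => hp hx; case: p => [[] x]; rewrite !statsE hp hx raddfD /= ?raddf0;
    congr pair; bool_vec.
move=> c c' [a x] [a' x'] hc hc' e.
move: (decode c' (a', x') hc'); rewrite -e decode // {e hc hc'}.
by case: a; case: a' => //= -[]; [move/M_inj-> | move->].
Qed.

Lemma codeC_near v : v \notin codeC -> exists2 p, p != 0 & v + ptvec p \in codeC.
Proof.
move=> hv; exists (ypar v, xsum v + ysum v).
  apply: contra hv => /eqP[hp /eqP]; rewrite addv_eq0 => /eqP hx; exact/inCP.
by apply/inCP; rewrite !statsE /=; case: (ypar v); split => //; bool_vec.
Qed.

Lemma codeD_near v : v \notin codeD -> exists2 p, p != 0 & v + ptvec p \in codeD.
Proof.
move=> hv; case hp: (ypar v).
  exists (false, xsum v + M (ysum v)).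
    apply: contra hv => /eqP[/eqP]; rewrite addv_eq0 => /eqP hx; exact/inDP.
  by apply/inDP; rewrite !statsE hp /= !addr0; split => //; bool_vec.
pose Minv := invF M_inj.
exists (true, ysum v + Minv (xsum v)) => //.
by apply/inDP; rewrite !statsE hp /= addvKl f_invF; split => //; bool_vec.
Qed.

Lemma hubs_near v : exists2 p, p != 0 & v + ptvec p \in hubs.
Proof.
have [hC|/codeC_near[p p0 hp]] := boolP (v \in codeC).
  by have [p p0 hp] := codeD_near (codeC_notD hC); exists p => //; exact: hubsD.
by exists p => //; exact: hubsC.
Qed.

Lemma hubs_tvc : is_tvc hgraph hubs.
Proof.
apply/andP; split.
  by apply/forallP => x; apply/forallP => y; apply/implyP => /andP[].
apply/forallP => x; have [p /ptvecP[i ei] hp] := hubs_near x.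
apply/existsP; exists (x + ptvec p); rewrite /hgraph /= hp orbT andbT ei.
exact: cube_adj_unitv.
Qed.

Lemma card_hubs : (#|hubs| <= 2 * 2 ^ (hdim - m.+1))%N.
Proof.
rewrite (leq_trans (leq_card_setU _ _)) // mul2n -addnn.
by rewrite leq_add ?card_codeC ?card_codeD.
Qed.

Local Notation eX x := (ptvec (false, x)).
Local Notation eY y := (ptvec (true, y)).
Implicit Types (A : {set vertex}) (u v w c d g : vertex) (p q : W) (a b x y z : V).

Lemma ptvec_eq p q : p != 0 -> ptvec p = ptvec q -> p = q.
Proof.
case/pointP => i <- /ffunP /(_ i); rewrite !ptvecE eqxx.
by move/esym/eqP.
Qed.

Definition hgraph_on A : rel vertex := [rel u v | [&& hgraph u v, u \in A & v \in A]].

Local Notation linked A := (connect (hgraph_on A)).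

Lemma linked_sym A : connect_sym (hgraph_on A).
Proof.
apply: sym_connect_sym => u v; rewrite /hgraph_on /= hgraph_sym.
by case: (u \in A); case: (v \in A); rewrite ?andbF.
Qed.

(* The sets in which we look for paths: the whole cube, and the cube minus
   one vertex. *)
Definition nearly_full A := forall u v, u != v -> (u \in A) || (v \in A).

Lemma nearly_fullT : nearly_full setT.
Proof. by move=> u v _; rewrite inE. Qed.

Lemma nearly_full_setC1 w : nearly_full [set~ w].
Proof.
by move=> u v; rewrite !inE; apply: contraR => /norP[/negPn/eqP-> /negPn/eqP->].
Qed.

Lemma linked_adj A u p : u \in A -> u + ptvec p \in A ->
  (u \in hubs) || (u + ptvec p \in hubs) -> linked A u (u + ptvec p).
Proof.
have [-> _ _ _ | /ptvecP[i ->] hu hv hs] := eqVneq p 0; first by rewrite ptvec0 addr0.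
by apply: connect1; rewrite /hgraph_on /hgraph /= cube_adj_unitv hs hu hv.
Qed.

(* Two hubs at distance two are linked through whichever of the two middle
   vertices is available. *)
Lemma linked_two A u p q : nearly_full A -> p.1 != q.1 ->
  u \in hubs -> u + ptvec p + ptvec q \in hubs ->
  u \in A -> u + ptvec p + ptvec q \in A ->
  linked A u (u + ptvec p + ptvec q).
Proof.
move=> hA pq huS hvS huA hvA.
have [p0|p_neq0] := eqVneq p 0.
  by move: hvS hvA; rewrite p0 ptvec0 addr0 => hvS hvA; apply: linked_adj; rewrite ?huS.
have mid_neq : u + ptvec p != u + ptvec q.
  by apply: contraNneq pq => /addrI /(ptvec_eq p_neq0) ->.
have vE : u + ptvec p + ptvec q = u + ptvec q + ptvec p by rewrite addrAC.
case/orP: (hA _ _ mid_neq) => hm.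
  apply: (connect_trans (y := u + ptvec p)); apply: linked_adj;
    by rewrite ?huS ?hvS ?orbT.
rewrite vE in hvS hvA *.
apply: (connect_trans (y := u + ptvec q)); apply: linked_adj;
  by rewrite ?huS ?hvS ?orbT.
Qed.

(* For [v] of even [ypar], [stepD v y] is the word of the perfect code [codeD]
   within distance one of [v + eY y]; symmetrically for [stepC]. *)
Definition stepD (v : vertex) (y : V) : vertex :=
  v + eY y + eX (xsum v + M (ysum v + y)).
Definition stepC (v : vertex) (z : V) : vertex :=
  v + eY z + eX (xsum v + ysum v + z).

Lemma ypar_stepD v y : ypar (stepD v y) = ~~ ypar v.
Proof. by rewrite !statsE; case: (ypar v). Qed.
Lemma ysum_stepD v y : ysum (stepD v y) = ysum v + y.
Proof. by rewrite !statsE /= addr0. Qed.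
Lemma xsum_stepD v y : xsum (stepD v y) = M (ysum v + y).
Proof. by rewrite !statsE /=; bool_vec. Qed.
Lemma ypar_stepC v z : ypar (stepC v z) = ~~ ypar v.
Proof. by rewrite !statsE; case: (ypar v). Qed.
Lemma ysum_stepC v z : ysum (stepC v z) = ysum v + z.
Proof. by rewrite !statsE /= addr0. Qed.
Lemma xsum_stepC v z : xsum (stepC v z) = ysum v + z.
Proof. by rewrite !statsE /=; bool_vec. Qed.

Lemma stepD_in v y : ~~ ypar v -> stepD v y \in codeD.
Proof. by move=> hv; apply/inDP; rewrite ypar_stepD xsum_stepD ysum_stepD. Qed.
Lemma stepC_in v z : ypar v -> stepC v z \in codeC.
Proof.
by move=> hv; apply/inCP; rewrite ypar_stepC xsum_stepC ysum_stepC hv.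
Qed.

Lemma stepD_neqC c y v : c \in codeC -> v \in codeC -> stepD c y != v.
Proof.
case/inCP => hc _ /codeC_notD; apply: contraNneq => <-.
by apply: stepD_in; rewrite hc.
Qed.

Lemma stepC_neqD d z v : d \in codeD -> v \in codeD -> stepC d z != v.
Proof.
case/inDP => hd _ hv; apply: contraTneq hv => <-.
exact/codeC_notD/stepC_in.
Qed.

Lemma linked_stepD A c y : nearly_full A -> c \in codeC ->
  c \in A -> stepD c y \in A -> linked A c (stepD c y).
Proof.
move=> hA hc hcA hdA; have /inCP[hp _] := hc.
apply: linked_two => //; first exact: hubsC.
by apply: hubsD; apply: stepD_in; rewrite hp.
Qed.

Lemma linked_stepC A d z : nearly_full A -> d \in codeD ->
  d \in A -> stepC d z \in A -> linked A d (stepC d z).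
Proof.
move=> hA hd hdA hcA; have /inDP[hp _] := hd.
apply: linked_two => //; first exact: hubsD.
exact/hubsC/stepC_in.
Qed.

Definition hop (c : vertex) (y z : V) : vertex := stepC (stepD c y) z.

Lemma hop_in c y z : c \in codeC -> hop c y z \in codeC.
Proof. by case/inCP => hc _; apply: stepC_in; rewrite ypar_stepD hc. Qed.

Lemma ysum_hop c y z : ysum (hop c y z) = ysum c + y + z.
Proof. by rewrite ysum_stepC ysum_stepD. Qed.

Lemma hopE c y z : c \in codeC -> hop c y z =
  c + eY y + eY z + eX (ysum c + M (ysum c + y))
    + eX (ysum c + M (ysum c + y) + y + z).
Proof.
case/inCP => _ hx; rewrite /hop /stepC xsum_stepD ysum_stepD /stepD hx.
have -> : M (ysum c + y) + (ysum c + y) + z = ysum c + M (ysum c + y) + y + z.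
  by bool_vec.
by bool_vec.
Qed.

Lemma linked_hop A c y z : nearly_full A -> c \in codeC ->
  c \in A -> stepD c y \in A -> hop c y z \in A -> linked A c (hop c y z).
Proof.
move=> hA hc hcA hdA hhA; apply: (connect_trans (linked_stepD hA hc hcA hdA)).
by apply: linked_stepC => //; apply: stepD_in; case/inCP: hc => ->.
Qed.

Lemma codeC0 : 0 \in codeC.
Proof. by apply/inCP; rewrite /ypar /xsum /ysum !wsum0. Qed.

Lemma codeC_add c g : c \in codeC -> g \in codeC -> c + g \in codeC.
Proof.
by case/inCP => hc hx /inCP[hg hy]; apply/inCP; rewrite !statsE hc hg hx hy.
Qed.

Lemma linked_hopT c y z : c \in codeC -> linked setT c (hop c y z).
Proof. by move=> hc; apply: linked_hop; rewrite ?in_setT //; exact: nearly_fullT. Qed.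

Definition linking g :=
  g \in codeC /\ forall c, c \in codeC -> linked setT c (c + g).

Lemma linking0 : linking 0.
Proof. by split=> [|c _]; rewrite ?codeC0 ?addr0. Qed.

Lemma linkingD g h : linking g -> linking h -> linking (g + h).
Proof.
move=> [hg lg] [hh lh]; split; first exact: codeC_add.
move=> c hc; rewrite addrA; apply: connect_trans (lg c hc) _.
exact/lh/codeC_add.
Qed.

(* The indicator of the affine plane [x + <a, b>] among the points [(false, _)]. *)
Definition plane x a b : vertex := eX x + eX (x + a) + eX (x + b) + eX (x + a + b).

Lemma plane_in x a b : plane x a b \in codeC.
Proof. by apply/inCP; rewrite !statsE /=; split=> //; bool_vec. Qed.

(* Two hops with the same parameters translate [c] by the plane spanned by
   [a] and [M a] through an arbitrary point [x]. *)
Lemma linking_planeM x a : linking (plane x a (M a)).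
Proof.
split=> [|c hc]; first exact: plane_in.
pose Y := ysum c; pose y := Y + invF M_inj (Y + x); pose z := y + a.
have hMy : M (Y + y) = Y + x by rewrite /y addvKl f_invF.
have hMya : M (Y + y + z + y) = Y + x + M a.
  have -> : Y + y + z + y = Y + y + a by rewrite /z; bool_vec.
  by rewrite raddfD hMy.
have -> : c + plane x a (M a) = hop (hop c y z) y z.
  rewrite (hopE _ _ (hop_in _ _ hc)) ysum_hop (hopE _ _ hc) -/Y hMy hMya.
  have -> : Y + (Y + x) = x by bool_vec.
  have -> : x + y + z = x + a by rewrite /z; bool_vec.
  have -> : Y + y + z + (Y + x + M a) = x + a + M a by rewrite /z; bool_vec.
  have -> : x + a + M a + y + z = x + M a by rewrite /z; bool_vec.
  by rewrite /plane; bool_vec.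
exact/(connect_trans (linked_hopT _ _ hc))/linked_hopT/hop_in.
Qed.

Definition planar a b := forall x, linking (plane x a b).

Lemma planar_sym a b : planar a b -> planar b a.
Proof.
move=> hab x; have -> : plane x b a = plane x a b; last exact: hab.
by rewrite /plane (_ : x + b + a = x + a + b) 1?addrAC //; bool_vec.
Qed.

Lemma planar_refl a : planar a a.
Proof.
move=> x; have -> : plane x a a = 0; last exact: linking0.
by rewrite /plane (_ : x + a + a = x); bool_vec.
Qed.

Lemma planarD a b b' : planar a b -> planar a b' -> planar a (b + b').
Proof.
move=> hb hb' x; have -> : plane x a (b + b') = plane x a b + plane (x + b) a b'.
  rewrite /plane (_ : x + b + a = x + a + b) 1?addrAC //.
  rewrite (_ : x + b + b' = x + (b + b')) 1?addrA //.
  by rewrite (_ : x + a + b + b' = x + a + (b + b')) 1?addrA //; bool_vec.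
exact: linkingD.
Qed.

Lemma planar_M a : planar a (M a).
Proof. by move=> x; exact: linking_planeM. Qed.

Lemma planar_span a : (forall j, planar a (unitv j)) -> forall b, planar a b.
Proof.
move=> ha b; rewrite -(sum_unitv b).
apply: (big_ind (planar a)) => [x | b1 b2 | j _]; [|exact: planarD|exact: ha].
have -> : plane x a 0 = 0 by rewrite /plane !addr0; bool_vec.
exact: linking0.
Qed.

Lemma eX0 : eX 0 = 0. Proof. exact: ptvec0. Qed.

Lemma weight_drop g i j p : g i -> g j -> i != j ->
  (weight (g + unitv i + unitv j + ptvec p)%R < weight g)%N.
Proof.
move=> gi gj ij.
have gij : (g + unitv i)%R j by rewrite !ffunE eq_sym (negbTE ij) addr0.
have le : (weight (g + unitv i + unitv j + ptvec p)%R
           <= (weight (g + unitv i + unitv j)%R).+1)%N.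
  by have [-> | /ptvecP[k ->]] := eqVneq p 0; rewrite ?ptvec0 ?addr0 ?weight_addS.
by rewrite (weight_unitv gi) (weight_unitv gij) ltnS (leq_trans le).
Qed.

(* The weight-three codewords: lines of the projective space over [W]. *)
Definition pline p q : vertex := ptvec p + ptvec q + ptvec (p + q).

Lemma pline_in p q : pline p q \in codeC.
Proof.
by case: p q => [[] x] [[] y]; apply/inCP; rewrite !statsE /=; split=> //; bool_vec.
Qed.

Lemma codeC_two_points g : g \in codeC -> g != 0 ->
  exists i j, [/\ g i, g j & i != j].
Proof.
move=> /inCP[hp hx] g0.
have [i gi] : exists i, g i.
  apply/existsP; apply: contraR g0 => /existsPn h.
  by apply/eqP/ffunP => i; rewrite ffunE; exact/negbTE.
case: (pickP (fun j => g j && (j != i))) => [j /andP[gj ji] | none].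
  by exists i, j; rewrite eq_sym.
have single (Z : zmodType) (f : W -> Z) : wsum f g = f (point i).
  by apply: wsum_supp1 => // j gj ji; move: (none j); rewrite gj ji.
move: hp hx (point_neq0 i); rewrite /ypar /xsum /ysum !single.
by case: (point i) => -[] x //= _ ->; rewrite eqxx.
Qed.

Lemma codeC_ind (P : vertex -> Prop) : P 0 ->
  (forall g h, P g -> P h -> P (g + h)) -> (forall p q, P (pline p q)) ->
  forall g, g \in codeC -> P g.
Proof.
move=> P0 PD Pline g; move: {2}(weight g) (leqnn (weight g)) => n.
elim: n g => [|n IH] g hw hg; have [-> //|g0] := eqVneq g 0.
  case: (codeC_two_points hg g0) => i [j [gi _ _]].
  by move: hw; rewrite /weight (cardsD1 i) inE gi.
case: (codeC_two_points hg g0) => i [j [gi gj ij]].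
set t := pline (point i) (point j).
have tE : g + t = g + unitv i + unitv j + ptvec (point i + point j).
  by rewrite /t /pline !ptvec_point !addrA.
have -> : g = (g + t) + t by rewrite -addrA addvv addr0.
apply: PD (Pline _ _); apply: IH; last exact/codeC_add/pline_in.
by rewrite -ltnS (leq_trans _ hw) // tE weight_drop.
Qed.

Section Shift.
Hypothesis M_shift : basis_shift M.

Let planar_at r := forall i j : 'I_m, val j = (i + r)%N -> planar (unitv i) (unitv j).

Let planar_at0 : planar_at 0.
Proof. by move=> i j; rewrite addn0 => /val_inj ->; exact: planar_refl. Qed.

Let planar_at1 : planar_at 1.
Proof.
move=> i j hj; have hi : (i.+1 < m)%N by move: (ltn_ord j); rewrite hj; lia.
rewrite (_ : j = Ordinal hi) -?M_shift; first exact: planar_M.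
by apply: val_inj; rewrite hj addn1.
Qed.

(* With [u = e_i + e_j], the relation [M u = e_(i+1) + e_(j+1)] moves planarity
   from distance [r] to distance [r + 2]. *)
Let planar_at_step r : planar_at r -> planar_at r.+2.
Proof.
move=> hr i k hk.
have hi1 : (i.+1 < m)%N by move: (ltn_ord k); rewrite hk; lia.
have hj : (i + r.+1 < m)%N by move: (ltn_ord k); rewrite hk; lia.
set ei1 := unitv (Ordinal hi1); set ej := unitv (Ordinal hj).
have hj1 : ((Ordinal hj).+1 < m)%N by move: (ltn_ord k); rewrite hk /=; lia.
have Mej : M ej = unitv k.
  by rewrite /ej M_shift; congr unitv; apply: val_inj; rewrite /= hk; lia.
set u := unitv i + ej.
have Mu : M u = ei1 + unitv k by rewrite /u raddfD M_shift Mej.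
have ei1_i : planar ei1 (unitv i) by apply/planar_sym/planar_at1; rewrite /= addn1.
have ei1_j : planar ei1 ej by apply: hr; rewrite /=; lia.
have u_ei1 : planar u ei1 by apply/planar_sym/planarD.
have u_k : planar u (unitv k).
  rewrite (_ : unitv k = M u + ei1); first exact/planarD/u_ei1/planar_M.
  by rewrite Mu; bool_vec.
have k_j : planar (unitv k) ej by apply/planar_sym/planar_at1; rewrite /= hk; lia.
have k_i : planar (unitv k) (unitv i).
  rewrite (_ : unitv i = u + ej); first exact/planarD/k_j/planar_sym.
  by rewrite /u; bool_vec.
exact: planar_sym.
Qed.

Let planar_at_all r : planar_at r.
Proof.
suff : planar_at r /\ planar_at r.+1 by case.
elim: r => [|r [h1 h2]]; first by split; [exact: planar_at0 | exact: planar_at1].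
by split=> //; apply: planar_at_step.
Qed.

Lemma planar_all a b : planar a b.
Proof.
have units i j : planar (unitv i) (unitv j).
  have [ij|ji] := leqP i j.
    by apply: (@planar_at_all (j - i)); rewrite subnKC.
  by apply/planar_sym/(@planar_at_all (i - j)); rewrite subnKC // ltnW.
apply/planar_sym/planar_span => j; apply/planar_sym/planar_span => i.
exact: units.
Qed.

(* One hop and a plane through the origin give the line
   [{(false, x), (true, y), (true, y + x)}]. *)
Lemma linking_line x y : linking (eX x + eY y + eY (y + x)).
Proof.
split=> [|c hc].
  by rewrite (addrC y); exact: (pline_in (false, x) (true, y)).
pose a := ysum c + M (ysum c + y).
have [_ lplane] := planar_all a x 0.
have -> : c + (eX x + eY y + eY (y + x)) = hop c y (y + x) + plane 0 a x.
  rewrite (hopE _ _ hc) -/a /plane !add0r eX0 (_ : a + y + (y + x) = a + x).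
    by bool_vec.
  by bool_vec.
exact/(connect_trans (linked_hopT _ _ hc))/lplane/hop_in.
Qed.

Lemma linking_pline p q : linking (pline p q).
Proof.
rewrite /pline; case: p q => [[] x] [[] y] /=.
- rewrite (_ : eY x + eY y + eX (x + y) = eX (x + y) + eY x + eY (x + (x + y))).
    exact: linking_line.
  by rewrite addvKl; bool_vec.
- rewrite (_ : eY x + eX y + eY (x + y) = eX y + eY x + eY (x + y)).
    exact: linking_line.
  by bool_vec.
- have -> : ptvec ((false, x) + (true, y)) = eY (y + x) by rewrite (addrC y).
  exact: linking_line.
- rewrite (_ : eX x + eX y + eX (x + y) = plane 0 x y); first exact: planar_all.
  by rewrite /plane eX0 !add0r; bool_vec.
Qed.

Lemma linked_codeC c c' : c \in codeC -> c' \in codeC -> linked setT c c'.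
Proof.
move=> hc hc'.
have [_ lc] := codeC_ind linking0 linkingD linking_pline (codeC_add hc hc').
by have := lc c hc; rewrite addrA addvv add0r.
Qed.

Lemma linked_codeC_near v : exists2 c, c \in codeC & linked setT v c.
Proof.
have [p _ hp] := hubs_near v.
have vp : linked setT v (v + ptvec p) by apply: linked_adj; rewrite ?in_setT ?hp ?orbT.
have [hC|hnC] := boolP (v + ptvec p \in codeC); first by exists (v + ptvec p).
have hD : v + ptvec p \in codeD by move: hp; rewrite in_setU (negbTE hnC).
exists (stepC (v + ptvec p) 0); first by apply: stepC_in; case/inDP: hD.
by apply: connect_trans vp (linked_stepC nearly_fullT hD _ _); rewrite in_setT.
Qed.

Lemma hgraph_connected : connected_on hgraph setT.
Proof.
move=> x y _ _; have [cx hcx lx] := linked_codeC_near x.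
have [cy hcy ly] := linked_codeC_near y.
apply: connect_trans lx (connect_trans (linked_codeC hcx hcy) _).
by rewrite linked_sym.
Qed.

End Shift.

Lemma stepD_avoid w y : w \in codeC -> stepD w y \in [set~ w].
Proof. by move=> hw; rewrite !inE stepD_neqC. Qed.

Lemma stepC_avoid w z : w \in codeD -> stepC w z \in [set~ w].
Proof. by move=> hw; rewrite !inE stepC_neqD. Qed.

Lemma linked_nbr_codeC w u : w \in codeC -> hgraph w u ->
  exists y, linked [set~ w] u (stepD w y).
Proof.
move=> hw /andP[/cube_adjP[i ->] _].
suff [y [q e]] : exists y q, stepD w y = w + unitv i + ptvec q.
  exists y; rewrite e; apply: linked_adj; rewrite -?e ?stepD_avoid //.
    by rewrite !inE addv_neq ?unitv_neq0.
  by rewrite (hubsD (stepD_in _ _)) ?orbT //; case/inCP: hw => ->.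
rewrite -ptvec_point; case: (point i) => -[] t.
  by exists t, (false, xsum w + M (ysum w + t)).
pose y := ysum w + invF M_inj (t + xsum w); exists y, (true, y).
rewrite /stepD addvKl f_invF (_ : xsum w + (t + xsum w) = t); [exact: addrAC | bool_vec].
Qed.

Lemma linked_nbr_codeD w u : w \in codeD -> hgraph w u ->
  exists z, linked [set~ w] u (stepC w z).
Proof.
move=> hw /andP[/cube_adjP[i ->] _].
suff [z [q e]] : exists z q, stepC w z = w + unitv i + ptvec q.
  exists z; rewrite e; apply: linked_adj; rewrite -?e ?stepC_avoid //.
    by rewrite !inE addv_neq ?unitv_neq0.
  by rewrite (hubsC (stepC_in _ _)) ?orbT //; case/inDP: hw.
rewrite -ptvec_point; case: (point i) => -[] t.
  by exists t, (false, xsum w + ysum w + t).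
pose z := xsum w + ysum w + t; exists z, (true, z).
rewrite /stepC (_ : xsum w + ysum w + z = t); [exact: addrAC | rewrite /z; bool_vec].
Qed.

Lemma linked_hop_avoid w c y z : w \in codeC -> c \in codeC ->
  c != w -> hop c y z != w -> linked [set~ w] c (hop c y z).
Proof.
move=> hw hc cw hw'; apply: (linked_hop (nearly_full_setC1 w) hc); rewrite !inE //.
exact: stepD_neqC hc hw.
Qed.

Lemma linked_stepD_hop w y z : w \in codeC -> hop w y z != w ->
  linked [set~ w] (stepD w y) (hop w y z).
Proof.
move=> hw hw'; apply: linked_stepC (nearly_full_setC1 w) _ (stepD_avoid _ hw) _.
  by apply: stepD_in; case/inCP: hw => ->.
by rewrite !inE.
Qed.

Lemma linked_stepD_square w y y' z z' : w \in codeC ->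
  hop w y z != w -> hop w y' z' != w -> hop (hop w y z) y' z' != w ->
  hop (hop w y z) y' z' = hop (hop w y' z') y z ->
  linked [set~ w] (stepD w y) (stepD w y').
Proof.
move=> hw h1 h2 h12 e.
have path a b a' b' : hop w a b != w -> hop (hop w a b) a' b' != w ->
    linked [set~ w] (stepD w a) (hop (hop w a b) a' b').
  move=> ha hab; apply: connect_trans (linked_stepD_hop hw ha) _.
  exact: linked_hop_avoid hw (hop_in _ _ hw) ha hab.
apply: connect_trans (path _ _ _ _ h1 h12) _.
by rewrite e linked_sym; apply: path; rewrite -?e.
Qed.

Lemma hop_neq w y z : y + z != 0 -> hop w y z != w.
Proof.
apply: contraNneq => /(congr1 ysum); rewrite ysum_hop -addrA.
by rewrite -{2}(addr0 (ysum w)) => /addrI ->.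
Qed.

Definition hopD d z y : vertex := stepD (stepC d z) y.

Lemma hopD_in d z y : d \in codeD -> hopD d z y \in codeD.
Proof. by case/inDP => hd _; apply: stepD_in; rewrite ypar_stepC hd. Qed.

Lemma ysum_hopD d z y : ysum (hopD d z y) = ysum d + z + y.
Proof. by rewrite ysum_stepD ysum_stepC. Qed.

Lemma hopDE d z y : d \in codeD -> hopD d z y =
  d + eY z + eY y + eX (M (ysum d) + ysum d + z)
    + eX (ysum d + z + M (ysum d + z + y)).
Proof.
case/inDP => _ hx; rewrite /hopD /stepD xsum_stepC ysum_stepC /stepC hx.
by bool_vec.
Qed.

Lemma hopD_neq w z y : z + y != 0 -> hopD w z y != w.
Proof.
apply: contraNneq => /(congr1 ysum); rewrite ysum_hopD -addrA.
by rewrite -{2}(addr0 (ysum w)) => /addrI ->.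
Qed.

Lemma linked_hopD_avoid w d z y : w \in codeD -> d \in codeD ->
  d != w -> hopD d z y != w -> linked [set~ w] d (hopD d z y).
Proof.
move=> hw hd dw hw'; have hdC : stepC d z \in codeC by apply: stepC_in; case/inDP: hd.
have hdw : stepC d z \in [set~ w] by rewrite !inE (stepC_neqD _ hd hw).
apply: connect_trans (linked_stepC (nearly_full_setC1 w) hd _ hdw) _.
  by rewrite !inE.
by apply: linked_stepD (nearly_full_setC1 w) hdC hdw _; rewrite !inE.
Qed.

Lemma linked_stepC_hopD w z y : w \in codeD -> hopD w z y != w ->
  linked [set~ w] (stepC w z) (hopD w z y).
Proof.
move=> hw hw'; apply: linked_stepD (nearly_full_setC1 w) _ (stepC_avoid _ hw) _.
  by apply: stepC_in; case/inDP: hw.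
by rewrite !inE.
Qed.

Lemma linked_stepC_square w z z' y y' : w \in codeD ->
  hopD w z y != w -> hopD w z' y' != w -> hopD (hopD w z y) z' y' != w ->
  hopD (hopD w z y) z' y' = hopD (hopD w z' y') z y ->
  linked [set~ w] (stepC w z) (stepC w z').
Proof.
move=> hw h1 h2 h12 e.
have path a b a' b' : hopD w a b != w -> hopD (hopD w a b) a' b' != w ->
    linked [set~ w] (stepC w a) (hopD (hopD w a b) a' b').
  move=> ha hab; apply: connect_trans (linked_stepC_hopD hw ha) _.
  exact: linked_hopD_avoid hw (hopD_in _ _ hw) ha hab.
apply: connect_trans (path _ _ _ _ h1 h12) _.
by rewrite e linked_sym; apply: path; rewrite -?e.
Qed.

Section FixedPointFree.
Hypothesis M_fpf : forall a, a + M a = 0 -> a = 0.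

Lemma linked_stepD_fpf w y y' : w \in codeC -> y != y' ->
  linked [set~ w] (stepD w y) (stepD w y').
Proof.
move=> hw yy'; have yy'0 : y + y' != 0 by rewrite addv_eq0.
pose a := M (y + y'); pose z := y + a; pose z' := y' + a.
have a0 : a != 0 by rewrite raddf_eq0.
have h1 : hop w y z != w by apply: hop_neq; rewrite addvKl.
have h2 : hop w y' z' != w by apply: hop_neq; rewrite addvKl.
have hC1 := hop_in y z hw; have hC2 := hop_in y' z' hw.
have e : hop (hop w y z) y' z' = hop (hop w y' z') y z.
  rewrite (hopE _ _ hC1) (hopE _ _ hC2) !ysum_hop (hopE _ _ hw) (hopE _ _ hw).
  set Y := ysum w.
  have E4 : Y + y + z + M (Y + y + z + y') + y' + z' =
            Y + y' + z' + M (Y + y' + z' + y).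
    by rewrite /z /z' /a !raddfD; bool_vec.
  have E3 : Y + y + z + M (Y + y + z + y') =
            Y + y' + z' + M (Y + y' + z' + y) + y + z.
    by rewrite /z /z' /a !raddfD; bool_vec.
  have E1 : Y + M (Y + y) + y + z = Y + M (Y + y') by rewrite /z /a !raddfD; bool_vec.
  have E2 : Y + M (Y + y') + y' + z' = Y + M (Y + y) by rewrite /z' /a !raddfD; bool_vec.
  by rewrite E4 E3 E1 E2; bool_vec.
have h12 : hop (hop w y z) y' z' != w.
  have [i hi] := pointP (isT : (true, y) != 0).
  have yz : y == z = false by apply/negbTE; rewrite eq_sym addv_neq.
  have yz' : y == z' = false.
    apply/negbTE; apply: contraNneq yy'0 => hy; apply/eqP/M_fpf.
    by rewrite {1}hy /z' /a; bool_vec.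
  apply/eqP => /ffunP /(_ i); rewrite (hopE _ _ hC1) (hopE _ _ hw) !ffunE !ptvecE hi.
  by rewrite !xpair_eqE /= eqxx yz yz' (negbTE yy'); case: (w i).
exact: linked_stepD_square hw h1 h2 h12 e.
Qed.

Lemma linked_stepC_fpf w z z' : w \in codeD -> z != z' ->
  linked [set~ w] (stepC w z) (stepC w z').
Proof.
move=> hw zz'; have zz'0 : z + z' != 0 by rewrite addv_eq0.
have N_inj : injective (fun a => a + M a).
  move=> a b /eqP; rewrite -addv_eq0 (_ : _ + _ = (a + b) + M (a + b)).
    by move/eqP/M_fpf/eqP; rewrite addv_eq0 => /eqP.
  by rewrite raddfD; bool_vec.
pose a := invF N_inj (z + z'); pose y := z + a; pose y' := z' + a.
have hMa : M a = a + (z + z') by rewrite -(f_invF N_inj (z + z')) -/a addvKl.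
have a0 : a != 0.
  by apply: contraNneq zz'0 => a0; rewrite -(f_invF N_inj (z + z')) -/a a0 raddf0 addr0.
have h1 : hopD w z y != w by apply: hopD_neq; rewrite addvKl.
have h2 : hopD w z' y' != w by apply: hopD_neq; rewrite addvKl.
have hD1 := hopD_in z y hw; have hD2 := hopD_in z' y' hw.
have e : hopD (hopD w z y) z' y' = hopD (hopD w z' y') z y.
  rewrite (hopDE _ _ hD1) (hopDE _ _ hD2) !ysum_hopD (hopDE _ _ hw) (hopDE _ _ hw).
  set Y := ysum w.
  have Ea : M (Y + z + y) + (Y + z + y) + z' = M Y + Y + z.
    by rewrite /y !raddfD hMa; bool_vec.
  have Eb : Y + z + y + z' + M (Y + z + y + z' + y') = Y + z + M (Y + z + y).
    by rewrite /y /y' !raddfD hMa; bool_vec.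
  have Ea' : M (Y + z' + y') + (Y + z' + y') + z = M Y + Y + z'.
    by rewrite /y' !raddfD hMa; bool_vec.
  have Eb' : Y + z' + y' + z + M (Y + z' + y' + z + y) = Y + z' + M (Y + z' + y').
    by rewrite /y /y' !raddfD hMa; bool_vec.
  by rewrite Ea Eb Ea' Eb'; bool_vec.
have h12 : hopD (hopD w z y) z' y' != w.
  have [i hi] := pointP (isT : (true, z) != 0).
  have zy : z == y = false by apply/negbTE; rewrite eq_sym addv_neq.
  have zy' : z == y' = false.
    apply/negbTE; apply: contraNneq a0 => hz; apply/eqP/M_inj; rewrite raddf0 hMa.
    by rewrite hz /y'; bool_vec.
  apply/eqP => /ffunP /(_ i); rewrite (hopDE _ _ hD1) (hopDE _ _ hw) !ffunE !ptvecE hi.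
  by rewrite !xpair_eqE /= eqxx zy zy' (negbTE zz'); case: (w i).
exact: linked_stepC_square hw h1 h2 h12 e.
Qed.

End FixedPointFree.

Section Identity.
Hypothesis M_id : forall a, M a = a.

Lemma linked_stepD_id w y y' : w \in codeC -> y != y' ->
  linked [set~ w] (stepD w y) (stepD w y').
Proof.
move=> hw yy'; have h : hop w y y' != w by apply: hop_neq; rewrite addv_eq0.
have hC := hop_in y y' hw; move/inCP: (hC) => [_ hx]; move/inCP: (hw) => [_ hxw].
have e : stepD (hop w y y') y = stepD w y'.
  rewrite /stepD hx ysum_hop (hopE _ _ hw) hxw !M_id.
  have -> : ysum w + (ysum w + y) + y + y' = y' by bool_vec.
  have -> : ysum w + y + y' + (ysum w + y + y' + y) = y by bool_vec.
  by rewrite !addvKl; bool_vec.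
apply: connect_trans (linked_stepD_hop hw h) _; rewrite -e.
apply: (linked_stepD (nearly_full_setC1 w) hC); rewrite !inE ?h //.
exact: stepD_neqC hC hw.
Qed.

Lemma linked_stepC_id w z z' : w \in codeD -> z != z' ->
  linked [set~ w] (stepC w z) (stepC w z').
Proof.
move=> hw zz'; have h : hopD w z z' != w by apply: hopD_neq; rewrite addv_eq0.
have hD := hopD_in z z' hw; move/inDP: (hD) => [_ hx]; move/inDP: (hw) => [_ hxw].
have e : stepC (hopD w z z') z = stepC w z'.
  rewrite /stepC hx ysum_hopD (hopDE _ _ hw) hxw !M_id.
  have -> : ysum w + z + z' + (ysum w + z + z') + z = z by bool_vec.
  have -> : ysum w + z + (ysum w + z + z') = z' by bool_vec.
  have YYa a : ysum w + ysum w + a = a by bool_vec.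
  by rewrite !YYa; bool_vec.
apply: connect_trans (linked_stepC_hopD hw h) _; rewrite -e.
apply: (linked_stepC (nearly_full_setC1 w) hD); rewrite !inE ?h //.
exact: stepC_neqD hD hw.
Qed.

End Identity.

Section TwoConnected.
Hypothesis M_shift : basis_shift M.
Hypothesis M_fpf_or_id : (forall a, a + M a = 0 -> a = 0) \/ (forall a, M a = a).

Lemma linked_stepD_pair w y y' : w \in codeC ->
  linked [set~ w] (stepD w y) (stepD w y').
Proof.
move=> hw; have [-> | yy'] := eqVneq y y'; first exact: connect0.
by case: M_fpf_or_id => h; [exact: linked_stepD_fpf | exact: linked_stepD_id].
Qed.

Lemma linked_stepC_pair w z z' : w \in codeD ->
  linked [set~ w] (stepC w z) (stepC w z').
Proof.
move=> hw; have [-> | zz'] := eqVneq z z'; first exact: connect0.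
by case: M_fpf_or_id => h; [exact: linked_stepC_fpf | exact: linked_stepC_id].
Qed.

(* A vertex outside the hubs has only hubs as neighbours, and any two of
   them have a second common neighbour. *)
Lemma linked_nbrs_out w u v : w \notin hubs -> hgraph w u -> hgraph w v ->
  linked [set~ w] u v.
Proof.
move=> wS; rewrite /hgraph /= (negbTE wS) /=.
move=> /andP[/cube_adjP[i ->] ui] /andP[/cube_adjP[j ->] vj].
have [<- | ij] := eqVneq i j; first exact: connect0.
have mid_neq : w + unitv i + unitv j != w.
  apply/eqP => /ffunP /(_ i); rewrite !ffunE eqxx (negbTE ij).
  by case: (w i).
have nbr k : w + unitv k \in [set~ w] by rewrite !inE addv_neq ?unitv_neq0.
apply: (connect_trans (y := w + unitv i + unitv j)); apply: connect1.
  by rewrite /hgraph_on /hgraph /= cube_adj_unitv ui nbr !inE mid_neq.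
rewrite /hgraph_on /hgraph /= vj orbT nbr !inE mid_neq /= andbT.
by rewrite cube_adj_sym addrAC cube_adj_unitv.
Qed.

Lemma linked_nbrs w u v : hgraph w u -> hgraph w v -> linked [set~ w] u v.
Proof.
move=> hu hv; have [hC | nC] := boolP (w \in codeC).
  have [y ly] := linked_nbr_codeC hC hu; have [y' ly'] := linked_nbr_codeC hC hv.
  apply: connect_trans ly _; rewrite linked_sym.
  by apply: connect_trans ly' _; exact: linked_stepD_pair.
have [hD | nD] := boolP (w \in codeD).
  have [z lz] := linked_nbr_codeD hD hu; have [z' lz'] := linked_nbr_codeD hD hv.
  apply: connect_trans lz _; rewrite linked_sym.
  by apply: connect_trans lz' _; exact: linked_stepC_pair.
by apply: linked_nbrs_out hu hv; rewrite in_setU negb_or nC nD.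
Qed.

Lemma linked_avoid_path w n v (s : seq vertex) : (size s <= n)%N -> v != w ->
  path hgraph v s -> last v s != w -> linked [set~ w] v (last v s).
Proof.
elim: n v s => [|n IH] v [|u s] //= hs vw; try by move=> *; exact: connect0.
case/andP => vu hs' lw; have [uw | uw] := eqVneq u w.
  subst u; case: s hs hs' lw => [|u s] /= hs; first by rewrite eqxx.
  case/andP => wu hs' lw.
  have uw : u != w by apply: contraTneq wu => ->; exact: hgraph_irr.
  apply: (connect_trans (y := u)); first by apply: linked_nbrs; rewrite // hgraph_sym.
  by apply: IH => //; lia.
apply: (connect_trans (y := u)); last by apply: IH => //; lia.
by apply: connect1; rewrite /hgraph_on /= vu !inE vw uw.
Qed.

Lemma hgraph_two_connected : (0 < m)%N -> two_connected hgraph.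
Proof.
move=> m_gt0; split; [|split].
- rewrite card_cube (@leq_trans (2 ^ 2)) ?leq_exp2l //.
  by rewrite /hdim; have := leq_exp2l 2 m.+1 (isT : (1 < 2)%N); lia.
- exact: hgraph_connected M_shift.
move=> w u v; rewrite !inE => uw.
have /connectP[s hs ->] := hgraph_connected M_shift (in_setT u) (in_setT v).
apply: (linked_avoid_path (leqnn _)) => //.
by apply: sub_path hs => ? ? /andP[].
Qed.

End TwoConnected.

End Codes.

End Hamming.

Section Xmul.
Variable n : nat.
Local Notation V := {ffun 'I_n.+1 -> bool}.

(* Multiplication by [X] in F_2[X] / (X^(n+1) + X + 1), on coefficient
   vectors; for [n = 0] this is the identity. *)
Definition xmul (y : V) : V :=
  [ffun j : 'I_n.+1 => (if j == ord0 then y ord_max else y (inord j.-1))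
                        + ((val j == 1)%N && y ord_max)].

Lemma xmul_is_nmod_morphism : nmod_morphism xmul.
Proof.
split=> [|a b]; apply/ffunP => j; rewrite !ffunE.
  by case: (j == ord0); case: (val j == 1)%N.
by case: (j == ord0); case: (val j == 1)%N; rewrite /= ?andbT ?andbF ?addr0; bool_taut.
Qed.

HB.instance Definition _ := GRing.isNmodMorphism.Build V V xmul xmul_is_nmod_morphism.

Lemma xmul_ord0 y : xmul y ord0 = y ord_max.
Proof. by rewrite ffunE eqxx addr0. Qed.

Lemma xmul_inord y j : (0 < j < n.+1)%N ->
  xmul y (inord j) = y (inord j.-1) + ((j == 1)%N && y ord_max).
Proof.
case/andP => j0 jn; have jord0 : (inord j == ord0 :> 'I_n.+1) = false.
  by apply/negbTE; rewrite -(inj_eq val_inj) /= inordK // -lt0n.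
by rewrite ffunE jord0 /= !inordK.
Qed.

Lemma xmul_inj : injective xmul.
Proof.
apply: raddf_inj => y hy.
have ymax : y ord_max = false by move/ffunP: hy => /(_ ord0); rewrite xmul_ord0 ffunE.
apply/ffunP => i; rewrite ffunE; have [-> // | ni] := eqVneq i ord_max.
have hi : (i < n)%N by move: ni (ltn_ord i); rewrite -(inj_eq val_inj) /=; lia.
move/ffunP: hy => /(_ (inord i.+1)); rewrite xmul_inord ?ltnS //= ffunE ymax andbF addr0.
by rewrite inord_val.
Qed.

Lemma xmul_shift : basis_shift xmul.
Proof.
move=> i h; apply/ffunP => j; rewrite !ffunE.
have -> : (ord_max == i) = false by apply/negbTE; rewrite -(inj_eq val_inj) /=; lia.
rewrite andbF addr0; have [-> | j0] := eqVneq j ord0; first by rewrite -(inj_eq val_inj).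
rewrite -!(inj_eq val_inj) /= inordK; last by move: (ltn_ord j); lia.
by move: j0; rewrite -(inj_eq val_inj) /=; case: (nat_of_ord j).
Qed.

End Xmul.

Lemma xmul_fpf n (y : {ffun 'I_n.+2 -> bool}) : y + xmul y = 0 -> y = 0.
Proof.
move/eqP; rewrite addv_eq0 => /eqP e.
have yE j : y j = xmul y j by rewrite {1}e.
have y_max : y ord_max = y (inord n.+1) by rewrite -[ord_max]inord_val.
have y0 : y ord0 = y ord_max by rewrite yE xmul_ord0.
have y_inord k : (0 < k < n.+2)%N -> y (inord k) = false.
  elim: k => [//|[|k] IH] /andP[_ hk].
    have i0 : inord 0 = ord0 :> 'I_n.+2 by apply: val_inj; rewrite /= inordK.
    by rewrite yE xmul_inord //= i0 y0; case: (y ord_max).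
  rewrite yE xmul_inord /=; last by lia.
  by rewrite IH ?addr0 //; lia.
apply/ffunP => j; rewrite ffunE; have [-> | j0] := eqVneq j ord0.
  by rewrite y0 y_max y_inord // ltnSn.
have -> : j = inord j by rewrite inord_val.
rewrite y_inord //; apply/andP; split=> //.
by rewrite lt0n; move: j0; rewrite -(inj_eq val_inj).
Qed.

Lemma xmul_fpf_or_id n :
  (forall a : {ffun 'I_n.+1 -> bool}, a + xmul a = 0 -> a = 0) \/
  (forall a : {ffun 'I_n.+1 -> bool}, xmul a = a).
Proof.
case: n => [|n]; [right | left; exact: xmul_fpf].
by move=> a; apply/ffunP => j; rewrite ffunE !ord1 eqxx addr0.
Qed.

Lemma le_twice_pow_add (R : rcfType) (t k : nat) (s : R) :
  (t <= 2 * 2 ^ k)%N -> 0 <= s -> t%:R <= 2 * (2 ^+ k + s).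
Proof.
move=> ht s0; apply: (@le_trans _ _ (2 * 2 ^ k)%N%:R); first by rewrite ler_nat.
by rewrite natrM natrX ler_wpM2l // lerDl.
Qed.

Theorem theorem4p4 (l : nat) (hl : (2 <= l)%N) :
  exists H : rel (cube (2 ^ l - 1)),
    [/\ spanning_subgraph (@cube_adj (2 ^ l - 1)) H,
        two_connected H &
        forall R : rcfType,
          ((tvc H)%:R : R) <=
            2 * (2 ^+ (2 ^ l - 1 - l) + Num.sqrt (2 ^+ (2 ^ l - 1)) / 2 ^+ l)].
Proof.
case: l hl => [|[|n]] // _.
exists (hgraph (@xmul n)); split.
- by split; [exact: hgraph_sym | exact: hgraph_sub].
- exact: hgraph_two_connected (@xmul_inj n) (@xmul_shift n) (xmul_fpf_or_id n) _.
move=> R; apply: le_twice_pow_add; last by rewrite divr_ge0 ?sqrtr_ge0 ?exprn_ge0.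
exact: leq_trans (tvc_le (hubs_tvc (@xmul_inj n))) (card_hubs (@xmul_inj n)).
Qed.
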